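(* Let $q$ be a power of an odd prime, and let $\theta\in\mathbb{F}_{q^2}\setminus\mathbb{F}_q$ satisfy $\theta^2=\mu_1\theta+\mu_0$ with $\mu_0,\mu_1\in\mathbb{F}_q$. Let \[ X=\{(s_0+s_1\theta,\ t_0+(4s_1s_0+2s_1^2\mu_1)\theta):s_0,s_1,t_0\in\mathbb{F}_q\}\subset\mathbb{F}_{q^2}^2. \] Then the induced subgraph $G_{q^2}[X]$ has maximum degree at most $2q-1$.
   Context: For a power $Q$ of an odd prime, the graph $G_Q$ has vertex set $\mathbb{F}_Q\times\mathbb{F}_Q$, and distinct vertices $(x_1,x_2)$, $(y_1,y_2)$ are adjacent if and only if $(x_1+y_1)^2=x_2+y_2$; $G_Q$ has no loops. *)

From HB Require Import structures.
From mathcomp Require Import all_boot all_order all_algebra all_field.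
Set Implicit Arguments. Unset Strict Implicit. Unset Printing Implicit Defensive.
Import GRing.Theory.
Local Open Scope ring_scope.

(* Adjacency in G_Q (Q = #|K|): distinct vertices x, y with (x1+y1)^2 = x2+y2. *)
Definition GQ_adj (K : fieldType) (x y : K * K) : bool :=
  (x != y) && ((x.1 + y.1) ^+ 2 == x.2 + y.2).

(* Elements of the subfield F_q of K (K of order q^2): fixed points of x |-> x^q. *)
Definition in_subfield (K : fieldType) (q : nat) (x : K) : bool := x ^+ q == x.

Definition Xset (K : finFieldType) (q : nat) (theta mu1 : K) : {set K * K} :=
  [set v | [exists s0 : K, exists s1 : K, exists t0 : K,
     [&& in_subfield q s0, in_subfield q s1, in_subfield q t0 &
         v == (s0 + s1 * theta,
               t0 + (4 * s1 * s0 + 2 * s1 ^+ 2 * mu1) * theta)]]].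

Definition induced_deg (K : finFieldType) (X : {set K * K}) (v : K * K) : nat :=
  #|[set w in X | GQ_adj v w]|.

From HB Require Import structures.
From mathcomp Require Import all_boot all_order all_algebra all_field.
From mathcomp Require Import ring zify.
Set Implicit Arguments.
Unset Strict Implicit.
Unset Printing Implicit Defensive.

Import GRing.Theory.
Local Open Scope ring_scope.

(* Write F for F_q and v = (s0 + s1 θ, t0 + c(s0, s1) θ), w = (s0' + s1' θ, ...)
   for two points of X.  A neighbour w of v is determined by w.1, since
   w.2 = (v.1 + w.1)^2 - v.2.  Expanding the adjacency equation in the F-basis
   (1, θ), its θ-coordinate reads (s1 - s1') (2 (s0 - s0') + μ1 (s1 - s1')) = 0,
   so w.1 lies on one of two affine F-lines through v.1 (q points each),
   which gives at most 2q - 1 neighbours. *)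

Section Subfield.

Variables (K : fieldType) (q : nat).
Hypothesis q_pchar : [pchar K].-nat q.

Let q_gt0 : (0 < q)%N. Proof. by case/andP: q_pchar. Qed.

Lemma in_subfieldD (x y : K) : in_subfield q x -> in_subfield q y -> in_subfield q (x + y).
Proof. by rewrite /in_subfield exprDn_pchar // => /eqP-> /eqP->. Qed.

Lemma in_subfieldM (x y : K) : in_subfield q x -> in_subfield q y -> in_subfield q (x * y).
Proof. by rewrite /in_subfield exprMn => /eqP-> /eqP->. Qed.

Lemma in_subfieldN (x : K) : in_subfield q x -> in_subfield q (- x).
Proof.
rewrite /in_subfield => /eqP xq.
have : (x + - x) ^+ q = 0 by rewrite subrr expr0n eqn0Ngt q_gt0.
by rewrite exprDn_pchar // xq => /(canRL (addKr x)) ->; rewrite addr0.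
Qed.

Lemma in_subfieldV (x : K) : in_subfield q x -> in_subfield q x^-1.
Proof. by rewrite /in_subfield exprVn => /eqP->. Qed.

Lemma in_subfieldX (x : K) n : in_subfield q x -> in_subfield q (x ^+ n).
Proof. by rewrite /in_subfield -exprM mulnC exprM => /eqP->. Qed.

Lemma in_subfield_nat n : in_subfield q (n%:R : K).
Proof.
elim: n => [|n IHn]; first by rewrite /in_subfield expr0n eqn0Ngt q_gt0.
by rewrite -addn1 natrD in_subfieldD // /in_subfield expr1n.
Qed.

Lemma in_subfield_coord_eq0 (theta a b : K) :
    ~~ in_subfield q theta -> in_subfield q a -> in_subfield q b ->
  a + b * theta = 0 -> b = 0.
Proof.
move=> thetaNF aF bF abtheta; apply: contraNeq thetaNF => b_neq0.
have -> : theta = - a / b.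
  by apply: (mulIf b_neq0); rewrite mulfVK // mulrC -(addKr a (b * theta)) abtheta addr0.
by apply: in_subfieldM; [apply: in_subfieldN | apply: in_subfieldV].
Qed.

End Subfield.

Ltac in_subfield_closure :=
  repeat first [ assumption | apply: in_subfield_nat | apply: in_subfieldD
               | apply: in_subfieldM | apply: in_subfieldN | apply: in_subfieldX ].

Lemma card_in_subfield_le (K : finFieldType) q :
  (1 < q)%N -> (#|[set x : K | in_subfield q x]| <= q)%N.
Proof.
move=> q_gt1; set Fq := [set x | _].
have size_P : size ('X^q - 'X : {poly K}) = q.+1.
  by rewrite size_polyDl ?size_polyXn // size_polyN size_polyX ltnS.
have P_neq0 : ('X^q - 'X : {poly K}) != 0 by rewrite -size_poly_eq0 size_P.
rewrite cardE -ltnS -size_P; apply: (max_poly_roots P_neq0 _ (enum_uniq _)).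
apply/allP => x; rewrite mem_enum inE /in_subfield => /eqP xq.
by rewrite /root !hornerE xq subrr.
Qed.

Lemma card_setU_meet_le (T : finType) (A B : {set T}) n :
  (#|A| <= n)%N -> (#|B| <= n)%N -> A :&: B != set0 -> (#|A :|: B| <= 2 * n - 1)%N.
Proof.
move=> An Bn; rewrite -card_gt0 => AB_gt0; have := cardsUI A B; lia.
Qed.

Lemma GQ_adj_fst_inj (K : fieldType) (v w w' : K * K) :
  GQ_adj v w -> GQ_adj v w' -> w.1 = w'.1 -> w = w'.
Proof.
case: w w' => a b [a' b'] /andP[_ /eqP e] /andP[_ /eqP e'] /= aa'.
by subst a'; congr (_, _); apply: (addrI v.2); rewrite -e -e'.
Qed.

Section InducedDegree.

Variables (K : finFieldType) (q : nat) (theta mu0 mu1 : K).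
Hypotheses (q_pchar : [pchar K].-nat q) (two_neq0 : 2%:R != 0 :> K).
Hypotheses (thetaNF : ~~ in_subfield q theta)
  (mu0F : in_subfield q mu0) (mu1F : in_subfield q mu1)
  (theta_root : theta ^+ 2 = mu1 * theta + mu0).

Let Fq := [set x : K | in_subfield q x].
Let X := Xset q theta mu1.

Lemma Xset_adj_theta_coord s0 s1 t0 s0' s1' t0' :
    in_subfield q s0 -> in_subfield q s1 -> in_subfield q t0 ->
    in_subfield q s0' -> in_subfield q s1' -> in_subfield q t0' ->
    ((s0 + s1 * theta) + (s0' + s1' * theta)) ^+ 2 =
      (t0 + (4 * s1 * s0 + 2 * s1 ^+ 2 * mu1) * theta)
      + (t0' + (4 * s1' * s0' + 2 * s1' ^+ 2 * mu1) * theta) ->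
  (s1 - s1') * (2 * (s0 - s0') + mu1 * (s1 - s1')) = 0.
Proof.
move=> s0F s1F t0F s0'F s1'F t0'F adj.
set a := (s0 + s0') ^+ 2 + (s1 + s1') ^+ 2 * mu0 - t0 - t0'.
set b := (s1 - s1') * (2 * (s0 - s0') + mu1 * (s1 - s1')).
(* (a, - b) are the coordinates of (v.1 + w.1)^2 - (v.2 + w.2) in the basis (1, θ). *)
have coord : a + (- b) * theta = 0.
  have -> : a + (- b) * theta =
      ((s0 + s1 * theta) + (s0' + s1' * theta)) ^+ 2
      - ((t0 + (4 * s1 * s0 + 2 * s1 ^+ 2 * mu1) * theta)
         + (t0' + (4 * s1' * s0' + 2 * s1' ^+ 2 * mu1) * theta))
      - (s1 + s1') ^+ 2 * (theta ^+ 2 - mu1 * theta - mu0).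
    by rewrite /a /b; ring.
  by rewrite adj theta_root; ring.
apply/eqP; rewrite -oppr_eq0; apply/eqP.
by apply: (in_subfield_coord_eq0 q_pchar thetaNF _ _ coord); rewrite /a /b; in_subfield_closure.
Qed.

Lemma Xset_neighbour_fst s0 s1 t0 w :
    in_subfield q s0 -> in_subfield q s1 -> in_subfield q t0 ->
    w \in X ->
    GQ_adj (s0 + s1 * theta, t0 + (4 * s1 * s0 + 2 * s1 ^+ 2 * mu1) * theta) w ->
  w.1 \in [set z + s1 * theta | z in Fq]
      :|: [set (s0 + mu1 * (s1 - y) / 2) + y * theta | y in Fq].
Proof.
move=> s0F s1F t0F; rewrite inE => /existsP[s0' /existsP[s1' /existsP[t0']]].
case/and4P=> s0'F s1'F t0'F /eqP-> /andP[_ /eqP adj].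
have := Xset_adj_theta_coord s0F s1F t0F s0'F s1'F t0'F adj.
move/eqP; rewrite mulf_eq0 => /orP[|] /eqP coord.
  have -> : s1' = s1 by apply/eqP; rewrite eq_sym -subr_eq0 coord.
  by rewrite inE; apply/orP; left; apply/imsetP; exists s0'; rewrite ?inE.
rewrite inE; apply/orP; right; apply/imsetP; exists s1'; rewrite ?inE //=.
congr (_ + _); apply: (mulIf two_neq0); rewrite mulrDl mulfVK //.
by rewrite -[LHS]addr0 -coord; ring.
Qed.

Lemma induced_deg_Xset_le v : (1 < q)%N -> v \in X -> (induced_deg X v <= 2 * q - 1)%N.
Proof.
move=> q_gt1; rewrite inE => /existsP[s0 /existsP[s1 /existsP[t0]]] /and4P[s0F s1F t0F /eqP->].
rewrite /induced_deg; set N := [set w in _ | _].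
have fst_inj : {in N &, injective (fun w : K * K => w.1)}.
  move=> w w'; rewrite !inE => /andP[_ vw] /andP[_ vw']; exact: (GQ_adj_fst_inj vw vw').
rewrite -(card_in_imset fst_inj).
apply: leq_trans (subset_leq_card _) (card_setU_meet_le _ _ _).
- apply/subsetP => _ /imsetP[w + ->]; rewrite inE => /andP[wX vw].
  exact: Xset_neighbour_fst s0F s1F t0F wX vw.
- exact: leq_trans (leq_imset_card _ _) (card_in_subfield_le _ q_gt1).
- exact: leq_trans (leq_imset_card _ _) (card_in_subfield_le _ q_gt1).
apply/set0Pn; exists (s0 + s1 * theta); rewrite inE; apply/andP; split.
  by apply/imsetP; exists s0; rewrite ?inE.
by apply/imsetP; exists s1; rewrite ?inE // subrr mulr0 mul0r addr0.
Qed.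

End InducedDegree.

Theorem mainTheorem11 (K : finFieldType) (p k q : nat)
  (hp : prime p) (hodd : odd p) (hk : (0 < k)%N) (hq : q = (p ^ k)%N)
  (hK : #|K| = (q ^ 2)%N)
  (theta mu0 mu1 : K)
  (htheta : ~~ in_subfield q theta)
  (hmu0 : in_subfield q mu0) (hmu1 : in_subfield q mu1)
  (hrel : theta ^+ 2 = mu1 * theta + mu0) :
  forall v, v \in Xset q theta mu1 ->
    (induced_deg (Xset q theta mu1) v <= 2 * q - 1)%N.
Proof.
have p_pchar : p \in [pchar K].
  by apply: (@card_finPcharP _ p (k * 2)) => //; rewrite expnM -hq.
have q_pchar : [pchar K].-nat q.
  by rewrite hq pnatX (eq_pnat _ (pcharf_eq p_pchar)) pnat_id.
have two_neq0 : 2%:R != 0 :> K.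
  apply: contraTneq hodd => two0.
  have : 2%N \in [pchar K] by rewrite inE two0 eqxx.
  by rewrite (pcharf_eq p_pchar) inE => /eqP <-.
have q_gt1 : (1 < q)%N by rewrite hq -(expn0 p) ltn_exp2l ?prime_gt1.
by move=> v; apply: (induced_deg_Xset_le (mu0 := mu0)).
Qed.
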